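(* Let $d\ge2$. Then for every $G\in C^2(\mathbb{R})$ there is a separately convex function $F:\mathbb{R}^d\to\mathbb{R}$ such that $F(t,t,\dots,t)=G(t)$ for each $t\in\mathbb{R}$.
   Context: A function $F:\mathbb{R}^d\to\mathbb{R}$ is called separately convex if it is convex on every line parallel to a coordinate axis. *)

From HB Require Import structures.
From mathcomp Require Import all_boot all_order all_algebra.
From mathcomp Require Import all_classical all_reals topology normedtype derive.
Set Implicit Arguments. Unset Strict Implicit. Unset Printing Implicit Defensive.
Import Order.TTheory GRing.Theory Num.Theory.
Import numFieldNormedType.Exports.
Local Open Scope ring_scope.

Definition convex_on_R (R : realType) (f : R -> R) : Prop :=
  forall (a b l : R), 0 <= l -> l <= 1 ->
    f (l * a + (1 - l) * b) <= l * f a + (1 - l) * f b.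

Definition separately_convex (R : realType) (d : nat)
    (F : ('I_d -> R) -> R) : Prop :=
  forall (x : 'I_d -> R) (i : 'I_d),
    convex_on_R (fun s : R => F (fun j => if j == i then s else x j)).

Definition C2 (R : realType) (G : R -> R) : Prop :=
  (forall x : R, derivable G x 1) /\
  (forall x : R, derivable (derive1 G) x 1) /\
  continuous (derive1 (derive1 G)).

(* Put F(x) = G(x_0)/2 + G(x_1)/2 + (A(x_0) + A(x_1)) (x_0 - x_1)^2: it equals G on the
   diagonal and is constant in the coordinates x_2, ..., x_(d-1). Along the x_0-axis at height
   x_1 = c its second derivative is G''(s)/2 + 2A(s) + [A''(s)(s-c)^2 + 4A'(s)(s-c) + 2A(c)],
   so F is separately convex as soon as A >= |G''| and the bracket is nonnegative for all s, c
   ("admissible" A). Admissible weights form a convex cone containing the nonnegative constants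
   and the cubic spline max(w,0)^3 with its translates and reflections; a locally finite
   nonnegative combination of the even splines max(s-n,0)^3 + max(-s-n,0)^3, weighted by bounds
   of |G''| on [-n-2, n+2], is a C^2 admissible majorant of |G''|. *)

From HB Require Import structures.
From mathcomp Require Import all_boot all_order all_algebra.
From mathcomp Require Import all_classical all_reals topology normedtype derive realfun convex.
From mathcomp Require Import lra ring.
Set Implicit Arguments.
Unset Strict Implicit.
Unset Printing Implicit Defensive.

Import Order.TTheory GRing.Theory Num.Theory.
Import numFieldNormedType.Exports.
Local Open Scope ring_scope.
Local Open Scope classical_set_scope.

Section RealLine.
Variable R : realType.
Implicit Types (s c w x : R).

Lemma convex_on_R_second_derivative (f f1 f2 : R -> R) :
  (forall s, is_derive s 1 f (f1 s)) -> (forall s, is_derive s 1 f1 (f2 s)) ->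
  (forall s, 0 <= f2 s) -> convex_on_R f.
Proof.
move=> df df1 f2_ge0.
have cf : continuous f.
  by move=> s; apply/differentiable_continuous/derivable1_diffP; have [] := df s.
have Df : 'D_1 f = f1 by apply/funext => s; rewrite derive_val.
suff conv_le a b l : a <= b -> 0 <= l -> l <= 1 ->
    f (l * a + (1 - l) * b) <= l * f a + (1 - l) * f b.
  move=> a b l l0 l1; have [ab|ba] := leP a b; first exact: conv_le.
  have := conv_le b a (1 - l) (ltW ba) ltac:(lra) ltac:(lra).
  have swap (u v : R) : (1 - l) * u + (1 - (1 - l)) * v = l * v + (1 - l) * u by ring.
  by rewrite !swap.
move=> ab l0 l1.
have := @second_derivative_convex R f a b _ _ _ _ _ (interval_inference.Itv01 l0 l1) ab.
rewrite !convRE /=; apply.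
- by move=> x _; rewrite Df derive_val.
- exact/cvg_at_left_filter/cf.
- exact/cvg_at_right_filter/cf.
- by move=> x _; have [] := df x.
- by move=> x _; rewrite Df; have [] := df1 x.
Qed.

Lemma is_derive_affine (f f1 : R -> R) (al be s : R) : (forall w, is_derive w 1 f (f1 w)) ->
  is_derive s 1 (fun x => f (al * x + be)) (al * f1 (al * s + be)).
Proof.
move=> df; rewrite mulrC.
apply: (@is_derive1_comp R f (fun x => al * x + be) s _ _ (df (al * s + be))).
have -> : (fun x : R => al * x + be) = al \*: id + cst be by apply/funext.
by apply: is_derive_eq; rewrite /GRing.scale /= mulr1 addr0.
Qed.

Lemma is_derive_maxr0X n w :
  is_derive w 1 (fun x => Num.max x 0 ^+ n.+2) (n.+2%:R * Num.max w 0 ^+ n.+1).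
Proof.
have [w0|w0|->] := ltgtP w 0.
- apply: (@near_eq_is_derive _ _ _ (cst 0)); last first.
    by apply: is_derive_eq; rewrite expr0n mulr0.
  near=> x; rewrite max_r ?expr0n //; apply: ltW; near: x; exact: lt_nbhsl.
- have dX : is_derive w 1 ((@id R) ^+ n.+2) (n.+2%:R * w ^+ n.+1).
    by apply: is_derive_eq; rewrite /GRing.scale /= mulr1.
  apply: (near_eq_is_derive _ dX).
  near=> x; rewrite exprfctE max_l //; apply: ltW; near: x; exact: lt_nbhsr.
- rewrite expr0n mulr0.
  have maxr0X_cont : continuous (fun x : R => Num.max x 0 ^+ n.+1).
    have maxr0_cont : continuous (fun x : R => Num.max x 0).
      by move=> x; apply: (@continuous_max _ _ id (cst 0)); [exact: cvg_id | exact: cvg_cst].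
    by move=> x; exact: (continuous_comp (maxr0_cont x) (@exprn_continuous R n.+1 (Num.max x 0))).
  set f := fun x : R => Num.max x 0 ^+ n.+2.
  have quot_cvg : (fun h : R => h^-1 *: ((f \o shift 0) (h *: 1) - f 0)) @ 0^' --> (0 : R).
    have lim0 : (fun x : R => Num.max x 0 ^+ n.+1) @ 0^' --> (0 : R).
      have e : Num.max 0 0 ^+ n.+1 = 0 :> R by rewrite maxxx expr0n.
      by rewrite -[X in _ --> X]e; apply: cvg_within_filter; exact: maxr0X_cont.
    apply: cvg_trans lim0.
    apply: near_eq_cvg; near=> h.
    rewrite /f /= addr0 maxxx expr0n subr0 /GRing.scale /= mulr1.
    have [h0|h0] := leP h 0; first by rewrite !expr0n mulr0.
    by rewrite [in RHS]exprS mulKf // gt_eqF.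
  by apply: DeriveDef; [exact: cvgP quot_cvg | exact: cvg_lim quot_cvg].
Unshelve. all: by end_near.
Qed.

Definition spline w := Num.max w 0 ^+ 3.
Definition spline1 w := 3 * Num.max w 0 ^+ 2.
Definition spline2 w := 6 * Num.max w 0.

Lemma is_derive_spline w : is_derive w 1 spline (spline1 w).
Proof. exact: is_derive_maxr0X. Qed.

Lemma is_derive_spline1 w : is_derive w 1 spline1 (spline2 w).
Proof.
apply: (is_derive_eq (is_deriveZ 3 (is_derive_maxr0X 0 w))).
by rewrite /GRing.scale /= expr1 mulrA -natrM.
Qed.

Definition admissible (A A1 A2 : R -> R) :=
  forall s c, 0 <= A2 s * (s - c) ^+ 2 + 4 * A1 s * (s - c) + 2 * A c.

Lemma admissible_spline : admissible spline spline1 spline2.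
Proof.
move=> s c; rewrite /spline /spline1 /spline2.
have [s0|s0] := leP s 0.
  by rewrite expr0n /= !mulr0 !mul0r !add0r mulr_ge0 // exprn_ge0 // le_max lexx orbT.
have [c0|c0] := leP c 0.
  rewrite expr0n /= mulr0 addr0.
  have sc : 0 < s - c by lra.
  by rewrite addr_ge0 // ?mulr_ge0 ?exprn_ge0 // ltW.
have [cs|sc] := leP c s.
  by rewrite !addr_ge0 // ?mulr_ge0 ?exprn_ge0 ?subr_ge0 // ltW.
set t := c - s; have t0 : 0 < t by rewrite subr_gt0.
have -> : s - c = - t by rewrite /t opprB.
have -> : c = s + t by rewrite /t addrC subrK.
have h1 : 0 < s * t by rewrite mulr_gt0.
have h2 : 0 <= s * (2 * s - t) ^+ 2 by rewrite mulr_ge0 ?exprn_even_ge0 // ltW.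
have h3 : 0 < s * t * t by rewrite !mulr_gt0.
have h4 : 0 < t * t * t by rewrite !mulr_gt0.
rewrite !exprSr !expr0 !mul1r in h2 *; nra.
Qed.

Lemma admissible_affine A A1 A2 (be sg : R) : sg ^+ 2 = 1 ->
  admissible A A1 A2 ->
  admissible (fun s => A (sg * s + be)) (fun s => sg * A1 (sg * s + be))
             (fun s => A2 (sg * s + be)).
Proof.
move=> sg2 hA s c; have := hA (sg * s + be) (sg * c + be).
have -> : sg * s + be - (sg * c + be) = sg * (s - c) by ring.
rewrite exprMn sg2 mul1r.
set a := A1 (sg * s + be).
by rewrite (_ : 4 * (sg * a) * (s - c) = 4 * a * (sg * (s - c))) //; ring.
Qed.

Lemma admissibleD A A1 A2 B B1 B2 : admissible A A1 A2 -> admissible B B1 B2 ->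
  admissible (fun s => A s + B s) (fun s => A1 s + B1 s) (fun s => A2 s + B2 s).
Proof. move=> hA hB s c; have := hA s c; have := hB s c; nra. Qed.

Lemma admissibleZ A A1 A2 k : 0 <= k -> admissible A A1 A2 ->
  admissible (fun s => k * A s) (fun s => k * A1 s) (fun s => k * A2 s).
Proof. move=> k0 hA s c; have := mulr_ge0 k0 (hA s c); nra. Qed.

Lemma admissible_cst k : 0 <= k -> admissible (fun=> k) (fun=> 0) (fun=> 0).
Proof. by move=> k0 s c; rewrite !(mul0r, mulr0, add0r) mulr_ge0. Qed.

Definition mirror (sg : R) (f : R -> R) (k s : R) := f (s - k) + sg * f (- s - k).

Lemma is_derive_mirror sg (f f1 : R -> R) k s : (forall w, is_derive w 1 f (f1 w)) ->
  is_derive s 1 (mirror sg f k) (mirror (- sg) f1 k s).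
Proof.
move=> df.
have -> : mirror sg f k = (fun x => f (1 * x + - k)) + sg \*: (fun x => f (-1 * x + - k)).
  by apply/funext => x; rewrite /mirror !fctE /= mul1r mulN1r.
apply: (is_derive_eq (is_deriveD (is_derive_affine 1 (- k) s df)
  (is_deriveZ sg (is_derive_affine (-1) (- k) s df)))).
by rewrite /mirror /GRing.scale /= !mul1r !mulN1r mulrN mulNr.
Qed.

Lemma admissible_mirror f f1 f2 k : admissible f f1 f2 ->
  admissible (mirror 1 f k) (mirror (-1) f1 k) (mirror 1 f2 k).
Proof.
move=> hf s c; have N1sq : (-1) ^+ 2 = 1 :> R by rewrite sqrrN expr1n.
have := admissibleD (admissible_affine (- k) (expr1n _ 2) hf)
  (admissible_affine (- k) N1sq hf) s c.
by rewrite /mirror !mul1r !mulN1r.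
Qed.

Lemma mirror_eq0 sg f k s : (forall w, w <= 0 -> f w = 0) -> `|s| <= k ->
  mirror sg f k s = 0.
Proof.
move=> f0; rewrite ler_norml => /andP[ks sk].
by rewrite /mirror !f0 ?mulr0 ?addr0 //; lra.
Qed.

Section LocallyFiniteSum.
Variable f : nat -> R -> R.
Hypothesis f_eq0 : forall n s, `|s| <= n%:R -> f n s = 0.

Definition lfsum s := \sum_(n < (Num.trunc `|s|).+1) f n s.

Lemma big_ord_vanish_widen N M s : (N <= M)%N -> `|s| <= N%:R ->
  \sum_(n < M) f n s = \sum_(n < N) f n s.
Proof.
move=> NM sN; rewrite -!(big_mkord xpredT (f^~ s)) (big_cat_nat (leq0n N) NM) /=.
rewrite [X in _ + X]big_nat_cond [X in _ + X]big1 ?addr0 // => n /andP[/andP[Nn _] _].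
by apply: f_eq0; rewrite (le_trans sN) // ler_nat.
Qed.

Lemma lfsumE N s : `|s| <= N%:R -> lfsum s = \sum_(n < N) f n s.
Proof.
move=> sN; have sT : `|s| <= (Num.trunc `|s|).+1%:R by apply/ltW/truncnS_gt.
have [NT|TN] := leqP N (Num.trunc `|s|).+1; first exact: big_ord_vanish_widen.
by rewrite (big_ord_vanish_widen (ltnW TN)).
Qed.

End LocallyFiniteSum.

Lemma is_derive_lfsum (f g : nat -> R -> R) s :
  (forall n s, `|s| <= n%:R -> f n s = 0) -> (forall n s, `|s| <= n%:R -> g n s = 0) ->
  (forall n (x : R), is_derive x 1 (f n) (g n x)) -> is_derive s 1 (lfsum f) (lfsum g s).
Proof.
move=> f0 g0 df; set N := (Num.trunc `|s|).+2.
have sN : `|s| < N%:R.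
  by apply: (lt_le_trans (truncnS_gt _)); rewrite ler_nat.
rewrite (lfsumE g0 (ltW sN)).
apply: (near_eq_is_derive _ (is_derive_sum (fun n : 'I_N => df n s))).
move: sN; rewrite ltr_norml => /andP[Ns sN].
near=> x; rewrite fct_sumE (@lfsumE f f0 N) // ler_norml.
apply/andP; split; apply: ltW; near: x; [exact: lt_nbhsr | exact: lt_nbhsl].
Unshelve. all: by end_near.
Qed.


Lemma admissible_sum N (F F1 F2 : nat -> R -> R) :
  (forall n, admissible (F n) (F1 n) (F2 n)) ->
  admissible (fun s => \sum_(n < N) F n s) (fun s => \sum_(n < N) F1 n s)
             (fun s => \sum_(n < N) F2 n s).
Proof.
move=> hF; elim: N => [|N IH] s c.
  by rewrite !big_ord0; exact: admissible_cst.
by rewrite !big_ord_recr; exact: (admissibleD IH (hF N)).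
Qed.

Lemma spline_eq0 w : w <= 0 -> spline w = 0.
Proof. by move=> w0; rewrite /spline max_r // expr0n. Qed.

Lemma spline1_eq0 w : w <= 0 -> spline1 w = 0.
Proof. by move=> w0; rewrite /spline1 max_r // expr0n mulr0. Qed.

Lemma spline2_eq0 w : w <= 0 -> spline2 w = 0.
Proof. by move=> w0; rewrite /spline2 max_r // mulr0. Qed.

Lemma spline_ge0 w : 0 <= spline w.
Proof. by rewrite exprn_ge0 // le_max lexx orbT. Qed.

Lemma mirror_spline_ge1 k s : k + 1 <= `|s| -> 1 <= mirror 1 spline k s.
Proof.
have spline_ge1 w : 1 <= w -> 1 <= spline w.
  by move=> w1; rewrite /spline max_l ?exprn_ege1 //; lra.
rewrite /mirror mul1r; have := spline_ge0 (s - k); have := spline_ge0 (- s - k).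
have [s0|s0] := lerP 0 s; [rewrite ger0_norm // | rewrite ltr0_norm //] => h1 h2 ks.
- by have := spline_ge1 (s - k) ltac:(lra); lra.
- by have := spline_ge1 (- s - k) ltac:(lra); lra.
Qed.

Section Weight.
Variable B : nat -> R.
Hypothesis B_ge0 : forall n, 0 <= B n.

Definition weight_term n s := B n.+1 * mirror 1 spline n%:R s.
Definition weight_term1 n s := B n.+1 * mirror (-1) spline1 n%:R s.
Definition weight_term2 n s := B n.+1 * mirror 1 spline2 n%:R s.

Definition weight s := B 0 + lfsum weight_term s.
Definition weight1 := lfsum weight_term1.
Definition weight2 := lfsum weight_term2.

Lemma weight_term_eq0 n s : `|s| <= n%:R -> weight_term n s = 0.
Proof. by move=> sn; rewrite /weight_term mirror_eq0 ?mulr0 //; exact: spline_eq0. Qed.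

Lemma weight_term1_eq0 n s : `|s| <= n%:R -> weight_term1 n s = 0.
Proof. by move=> sn; rewrite /weight_term1 mirror_eq0 ?mulr0 //; exact: spline1_eq0. Qed.

Lemma weight_term2_eq0 n s : `|s| <= n%:R -> weight_term2 n s = 0.
Proof. by move=> sn; rewrite /weight_term2 mirror_eq0 ?mulr0 //; exact: spline2_eq0. Qed.

Lemma is_derive_weight s : is_derive s 1 weight (weight1 s).
Proof.
have dterm n x : is_derive x 1 (weight_term n) (weight_term1 n x).
  exact: is_deriveZ (is_derive_mirror 1 n%:R x is_derive_spline).
have := is_deriveD (is_derive_cst (B 0) s 1)
  (is_derive_lfsum s weight_term_eq0 weight_term1_eq0 dterm).
by rewrite add0r.
Qed.

Lemma is_derive_weight1 s : is_derive s 1 weight1 (weight2 s).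
Proof.
have dterm n x : is_derive x 1 (weight_term1 n) (weight_term2 n x).
  have := is_deriveZ (B n.+1) (is_derive_mirror (-1) n%:R x is_derive_spline1).
  by rewrite opprK.
exact: is_derive_lfsum s weight_term1_eq0 weight_term2_eq0 dterm.
Qed.

Lemma admissible_weight : admissible weight weight1 weight2.
Proof.
move=> s c; set N := (Num.trunc (`|s| + `|c|)).+1.
have scN : `|s| + `|c| <= N%:R by apply/ltW/truncnS_gt.
have sN : `|s| <= N%:R by have := normr_ge0 c; lra.
have cN : `|c| <= N%:R by have := normr_ge0 s; lra.
rewrite /weight /weight1 /weight2 (lfsumE weight_term_eq0 cN).
rewrite (lfsumE weight_term1_eq0 sN) (lfsumE weight_term2_eq0 sN).
have := admissibleD (admissible_cst (B_ge0 0)) (admissible_sum N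
  (fun n => admissibleZ (B_ge0 n.+1) (admissible_mirror n%:R admissible_spline))) s c.
by rewrite !add0r.
Qed.

Lemma weight_ge (kap : R -> R) :
  (forall n s, `|s| <= n.+1%:R -> kap s <= B n) -> forall s, kap s <= weight s.
Proof.
move=> kapB s; have sT := truncnS_gt `|s|.
have term_ge0 n x : 0 <= weight_term n x.
  by rewrite /weight_term /mirror mul1r mulr_ge0 ?addr_ge0 ?spline_ge0.
have lfsum_ge0 : 0 <= lfsum weight_term s by apply: sumr_ge0 => n _.
rewrite /weight; case eT : (Num.trunc `|s|) sT => [|m] sT.
  by have := kapB 0%N s (ltW sT); have := B_ge0 0; lra.
have sm : m.+1%:R <= `|s| by rewrite -truncn_gt_nat eT.
have term_m : kap s <= weight_term m s.
  apply: (le_trans (kapB m.+1 s (ltW sT))).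
  rewrite /weight_term -[leLHS]mulr1 ler_wpM2l // mirror_spline_ge1 //.
  by rewrite -natr1 in sm.
rewrite /lfsum eT !big_ord_recr /=.
have : 0 <= \sum_(n < m) weight_term n s by apply: sumr_ge0 => n _.
have := term_ge0 m.+1 s; have := B_ge0 0; lra.
Qed.

End Weight.

Lemma convex_on_R_weighted_square (G G1 G2 A A1 A2 : R -> R) c :
  (forall s, is_derive s 1 G (G1 s)) -> (forall s, is_derive s 1 G1 (G2 s)) ->
  (forall s, is_derive s 1 A (A1 s)) -> (forall s, is_derive s 1 A1 (A2 s)) ->
  admissible A A1 A2 -> (forall s, `|G2 s| <= A s) ->
  convex_on_R (fun s => G s / 2 + G c / 2 + (A s + A c) * (s - c) ^+ 2).
Proof.
move=> dG dG1 dA dA1 hA G2A.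
have dq s : is_derive s 1 ((id - cst c) ^+ 2) (2 * (s - c)).
  by apply: is_derive_eq; rewrite /GRing.scale /= !fctE expr1 subr0 mulr1.
pose f1 s := G1 s / 2 + (A1 s * (s - c) ^+ 2 + (A s + A c) * (2 * (s - c))).
pose f2 s := G2 s / 2 + 2 * A s + (A2 s * (s - c) ^+ 2 + 4 * A1 s * (s - c) + 2 * A c).
apply: (@convex_on_R_second_derivative _ f1 f2) => s.
- have -> : (fun s => G s / 2 + G c / 2 + (A s + A c) * (s - c) ^+ 2) =
      2^-1 \*: G + cst (G c / 2) + (A + cst (A c)) * (id - cst c) ^+ 2.
    by apply/funext => x; rewrite !fctE /= mulrC.
  have := dG s; have := dA s; have := dq s => ? ? ?.
  by apply: is_derive_eq; rewrite !fctE /GRing.scale /= /f1; ring.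
- have -> : f1 = 2^-1 \*: G1 + (A1 * (id - cst c) ^+ 2 + (A + cst (A c)) * (2 \*: (id - cst c))).
    by apply/funext => x; rewrite !fctE /f1 /GRing.scale /= /GRing.scale /=; ring.
  have := dG1 s; have := dA s; have := dA1 s; have := dq s => ? ? ? ?.
  by apply: is_derive_eq; rewrite /f2 !fctE /GRing.scale /= /GRing.scale /=; ring.
- have := hA s c; have := G2A s; have := normr_ge0 (G2 s).
  by have := ler_norm (- G2 s); rewrite normrN /f2; lra.
Qed.

Lemma continuous_bounded_on_balls (kap : R -> R) : continuous kap ->
  exists B : nat -> R, forall n, 0 <= B n /\ forall s, `|s| <= n%:R -> kap s <= B n.
Proof.
move=> ckap.
have bound (n : nat) : exists b, 0 <= b /\ forall s, `|s| <= n%:R -> kap s <= b.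
  have nn : - n%:R <= n%:R :> R by have := ler0n R n; lra.
  have [m _ m_max] := EVT_max nn (continuous_subspaceT ckap).
  exists `|kap m|; split => // s; rewrite ler_norml => sn.
  by apply: le_trans (m_max s _) (ler_norm _); rewrite in_itv.
by have [B hB] := choice bound; exists B.
Qed.

Lemma continuous_admissible_majorant (kap : R -> R) : continuous kap ->
  exists A A1 A2 : R -> R, [/\ forall s, is_derive s 1 A (A1 s),
    forall s, is_derive s 1 A1 (A2 s), admissible A A1 A2 & forall s, kap s <= A s].
Proof.
move=> /continuous_bounded_on_balls[B hB].
have B_ge0 n : 0 <= (B \o S) n by have [] := hB n.+1.
exists (weight (B \o S)), (weight1 (B \o S)), (weight2 (B \o S)); split.
- exact: is_derive_weight.
- exact: is_derive_weight1.
- exact: (admissible_weight B_ge0).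
- by apply: (weight_ge B_ge0) => n s; have [_] := hB n.+1; apply.
Qed.

End RealLine.

Theorem lemma2p1 (R : realType) (d : nat) (hd : (2 <= d)%N)
    (G : R -> R) (hG : C2 G) :
  exists F : ('I_d -> R) -> R,
    separately_convex F /\ (forall t : R, F (fun _ => t) = G t).
Proof.
have [G_derivable [G1_derivable G2_cont]] := hG.
have dG (s : R) : is_derive s 1 G (derive1 G s).
  by rewrite derive1E; exact: derivableP (G_derivable s).
have dG1 (s : R) : is_derive s 1 (derive1 G) (derive1 (derive1 G) s).
  by rewrite [X in is_derive _ _ _ X]derive1E; exact: derivableP (G1_derivable s).
have [A [A1 [A2 [dA dA1 hA G2A]]]] :=
  continuous_admissible_majorant (fun s => cvg_norm (G2_cont s)).
pose H u v := G u / 2 + G v / 2 + (A u + A v) * (u - v) ^+ 2.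
have H_convex c : convex_on_R (H ^~ c) := convex_on_R_weighted_square c dG dG1 dA dA1 hA G2A.
have HC u v : H u v = H v u by rewrite /H; ring.
pose i0 : 'I_d := Ordinal (ltnW hd); pose i1 : 'I_d := Ordinal hd.
exists (fun z => H (z i0) (z i1)); split => [z i|t]; last first.
  by rewrite /H subrr expr0n /= mulr0 addr0 -splitr.
have [->|_] := eqVneq i i0; first exact: H_convex.
have [_|_] := eqVneq i1 i.
  by under eq_fun do rewrite HC; exact: H_convex.
by move=> a b l _ _; lra.
Qed.
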